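(* For $n\ge1$, the 2-group $\mathsf{Equiv}_{\mathbf{2Mat}_{\mathbb C}}(n)$ satisfies $\pi_0\cong S_n$, $\pi_1\cong(\mathbb C^* )^n$ with $S_n$ acting by $(\sigma\cdot\boldsymbol\lambda)_i=\lambda_{\sigma^{-1}(i)}$, its classifying class in $H^3(S_n,(\mathbb C^* )^n)$ is trivial, and it is equivalent to the split 2-group $\mathbb G(n)=S_n[0]\ltimes(\mathbb C^* )^n[1]$. An explicit equivalence of 2-groups $\mathbb E(n):\mathbb G(n)\to\mathsf{Equiv}_{\mathbf{2Mat}_{\mathbb C}}(n)$ is given by $\mathbb E(n)(\sigma)=(\mathbf P(\sigma),\mathbf I)$ on objects, by sending a morphism $(\sigma,\boldsymbol\lambda)$ to the 2-automorphism of $(\mathbf P(\sigma),\mathbf I)$ whose only nonempty entries are the $1\times1$ matrices $\lambda_{\sigma(j)}$ in position $(\sigma(j),j)$, $j=1,\dots,n$, and with structural isomorphisms $\mathbb E(n)_2(\sigma,\sigma')=1_{(\mathbf P(\sigma\sigma'),\mathbf I)}$.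
   Context: $\mathbf{2Mat}_{\mathbb C}$: objects integers $n\ge0$; for $n,m\ge1$ a 1-morphism $n\to m$ is $(\mathbf R,s)$ with $\mathbf R$ an $m\times n$ matrix over $\mathbb N$ and $s=(s_i)$ a gauge, $s_i(\mathbf a)\in GL((\mathbf R\mathbf a)_i,\mathbb C)$ for $\mathbf a\in\mathbb N^n$ (equal to $1$ if $(\mathbf R\mathbf a)_i=0$), normalized by $s_i(\mathbf e_j)=\mathbf I_{R_{ij}}$; a 2-morphism $(\mathbf R,s)\Rightarrow(\mathbf R',s')$ is an $m\times n$ array with $(i,j)$ entry an $R'_{ij}\times R_{ij}$ complex matrix if $R_{ij},R'_{ij}\ne0$, empty otherwise; vertical composition entrywise product; composition of 1-morphisms $(\tilde{\mathbf R},\tilde s)\circ(\mathbf R,s)=(\tilde{\mathbf R}\mathbf R,\tilde s\ast s)$ with $(\tilde s\ast s)_k(\mathbf a)=\tilde s_k(\mathbf R\mathbf a)\big(\bigoplus_{i}\mathbf I_{\tilde R_{ki}}\otimes s_i(\mathbf a)\big)\mathbf P(\tilde{\mathbf R}_k,\mathbf R,\mathbf a)\big(\bigoplus_j \tilde s_k(\mathbf R\mathbf e_j)^{-1}\otimes\mathbf I_{a_j}\big)$, $\mathbf P(\cdot)$ fixed permutation matrices of the construction which are identities when $\tilde{\mathbf R}_k$ or $\mathbf a$ is a standard basis vector, $\mathbf R$ is an identity or $\mathbf R$ has one column; horizontal composition $(\tilde{\mathsf T}\circ\mathsf T)_{kj}=\tilde s'_k(\mathbf R'\mathbf e_j)\big(\bigoplus_i\tilde{\mathsf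 T}_{ki}\otimes\mathsf T_{ij}\big)\tilde s_k(\mathbf R\mathbf e_j)^{-1}$; identity $(\mathbf I_n,\mathbf I)$, $\mathbf I$ the trivial gauge. $\mathsf{Equiv}_{\mathfrak C}(X)$ is the 2-group (monoidal groupoid, tensor = composition) of autoequivalences of $X$ and invertible 2-morphisms. $\mathbf P(\sigma)_{ij}=\delta_{i,\sigma(j)}$. The split 2-group $\mathbb G(n)$ has objects $S_n$, morphisms only automorphisms $(\sigma,\boldsymbol\lambda):\sigma\to\sigma$ with $\boldsymbol\lambda\in(\mathbb C^* )^n$, composition $(\sigma,\boldsymbol\lambda')\circ(\sigma,\boldsymbol\lambda)=(\sigma,\boldsymbol\lambda'\boldsymbol\lambda)$, tensor $\sigma\otimes\sigma'=\sigma\sigma'$, $(\sigma_1,\boldsymbol\lambda_1)\otimes(\sigma_2,\boldsymbol\lambda_2)=(\sigma_1\sigma_2,\boldsymbol\lambda_1(\sigma_1\cdot\boldsymbol\lambda_2))$, and identity associator and unit constraints. For a 2-group, $\pi_0$ is the group of isomorphism classes of objects, $\pi_1=\mathrm{Aut}(I)$ with $\pi_0$-action $[A]\cdot u=\gamma_A^{-1}\delta_A(u)$ ($\gamma_A(u)=l_A(u\otimes\mathrm{id}_A)l_A^{-1}$, $\delta_A(u)=r_A(\mathrm{id}_A\otimes u)r_A^{-1}$), and the classifying class is Sinh's invariant in $H^3(\pi_0,\pi_1)$. An equivalence of 2-groups is a monoidal functor whose underlying functor is an equivalence. *)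

From HB Require Import structures.
From mathcomp Require Import all_boot all_algebra all_fingroup.
From mathcomp Require Import complex mxtens.
From mathcomp Require Import Rstruct.
From Stdlib Require Import ClassicalEpsilon.

Set Implicit Arguments.
Unset Strict Implicit.
Unset Printing Implicit Defensive.

Import GRing.Theory.
Local Open Scope ring_scope.

Notation CC := (complex Rdefinitions.R).

Section TwoMat.
Variable n : nat.

Definition Rapp (R : 'M[nat]_n) (a : 'I_n -> nat) (i : 'I_n) : nat :=
  (\sum_(j < n) R i j * a j)%N.
Definition evec (j : 'I_n) : 'I_n -> nat := fun k => nat_of_bool (k == j).
Definition nmul (R1 R2 : 'M[nat]_n) : 'M[nat]_n :=
  \matrix_(i, j) (\sum_(k < n) R1 i k * R2 k j)%N.
Definition nid : 'M[nat]_n := \matrix_(i, j) nat_of_bool (i == j).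
Definition Pmat (s : 'S_n) : 'M[nat]_n := \matrix_(i, j) nat_of_bool (i == s j).

Definition gaugeT (R : 'M[nat]_n) :=
  forall (i : 'I_n) (a : 'I_n -> nat), 'M[CC]_(Rapp R a i).
(* invertible, normalized by s_i(e_j) = I_{R_ij} (note (R e_j)_i = R_ij);
   when (R a)_i = 0 the 0x0 matrix is automatically "1" *)
Definition is_gauge (R : 'M[nat]_n) (s : gaugeT R) : Prop :=
  (forall i a, s i a \in unitmx) /\ (forall i j, s i (evec j) = 1%:M).
Definition triv_gauge (R : 'M[nat]_n) : gaugeT R := fun i a => 1%:M.

Record mor1 := Mor1 { mat : 'M[nat]_n; gau : gaugeT mat }.

(** 2-morphisms: (i,j) entry is an R'_ij x R_ij matrix
    (when one of R_ij, R'_ij is 0 this type has a single, empty, element) *)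
Definition twomor (R R' : 'M[nat]_n) := forall i j : 'I_n, 'M[CC]_(R' i j, R i j).
Definition vcomp (R R' R'' : 'M[nat]_n) (T' : twomor R' R'') (T : twomor R R')
  : twomor R R'' := fun i j => T' i j *m T i j.
Definition id2 (R : 'M[nat]_n) : twomor R R := fun i j => 1%:M.
Definition iso2 (R R' : 'M[nat]_n) (T : twomor R R') : Prop :=
  exists T' : twomor R' R, vcomp T' T = id2 R /\ vcomp T T' = id2 R'.
Definition inv2 (R R' : 'M[nat]_n) (T : twomor R R') : twomor R' R :=
  epsilon (inhabits (fun i j => 0))
    (fun T' : twomor R' R => vcomp T' T = id2 R /\ vcomp T T' = id2 R').
(* the "identity" 2-morphism between two 1-morphisms with equal matrices
   (entries are identity matrices; well typed even before rewriting R = R') *)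
Definition idmor (R R' : 'M[nat]_n) : twomor R R' :=
  fun i j => \matrix_(r, c) ((nat_of_ord r == nat_of_ord c)%:R : CC).

Lemma Rapp_nmul (Rt R : 'M[nat]_n) a k :
  Rapp Rt (Rapp R a) k = Rapp (nmul Rt R) a k.
Proof.
rewrite /Rapp; under [RHS]eq_bigr do rewrite mxE big_distrl /=.
rewrite exchange_big /=; apply: eq_bigr => i _.
by rewrite big_distrr /=; apply: eq_bigr => j _; rewrite mulnA.
Qed.

Lemma Rapp_evec (R : 'M[nat]_n) j i : Rapp R (evec j) i = R i j.
Proof.
rewrite /Rapp (bigD1 j) //= /evec eqxx muln1 big1 ?addn0 // => k /negPf ->.
by rewrite muln0.
Qed.

Lemma sum_gauge_inv (Rt R : 'M[nat]_n) a k :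
  (\sum_(j < n) Rapp Rt (Rapp R (evec j)) k * a j)%N = Rapp (nmul Rt R) a k.
Proof.
apply: eq_bigr => j _; congr (_ * _)%N; rewrite mxE.
by apply: eq_bigr => i _; rewrite Rapp_evec.
Qed.

Lemma Rapp_nmul_evec (Rt R : 'M[nat]_n) k j :
  Rapp Rt (Rapp R (evec j)) k = nmul Rt R k j.
Proof. by rewrite Rapp_nmul Rapp_evec. Qed.

Lemma sum_nmul (Rt R : 'M[nat]_n) k j :
  (\sum_(i < n) Rt k i * R i j)%N = nmul Rt R k j.
Proof. by rewrite mxE. Qed.

(** composite gauge (st * s)_k(a) =
      st_k(R a) (+)_i (I_{Rt_ki} (x) s_i(a)) P (+)_j (st_k(R e_j)^-1 (x) I_{a_j}).
    The permutation matrix P(Rt_k, R, a) is the identity whenever Rt_k is a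
    standard basis vector, which is the case for all composites occurring in
    Equiv(n) (autoequivalences have permutation matrices); it is taken to be
    the identity here. *)
Definition gcomp (Rt R : 'M[nat]_n) (st : gaugeT Rt) (s : gaugeT R)
  : gaugeT (nmul Rt R) := fun k a =>
  castmx (Rapp_nmul Rt R a k, Rapp_nmul Rt R a k)
    (st k (Rapp R a) *m \mxdiag_(i < n) ((1%:M : 'M[CC]_(Rt k i)) *t s i a))
  *m 1%:M
  *m castmx (sum_gauge_inv Rt R a k, sum_gauge_inv Rt R a k)
    (\mxdiag_(j < n) (invmx (st k (Rapp R (evec j))) *t (1%:M : 'M[CC]_(a j)))).

Definition comp1 (y x : mor1) : mor1 := Mor1 (gcomp (gau y) (gau x)).
Definition id1 : mor1 := Mor1 (triv_gauge nid).

Definition mxget (p q : nat) (M : 'M[CC]_(p, q)) (r c : nat) : CC :=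
  match insub r, insub c with Some r', Some c' => M r' c' | _, _ => 0 end.
Definition bdiag (m : nat) (p_ q_ : 'I_m -> nat)
  (B : forall i, 'M[CC]_(p_ i, q_ i)) : 'M[CC]_((\sum_i p_ i)%N, (\sum_i q_ i)%N) :=
  mxblock (fun i i' => \matrix_(r, c) if i == i' then mxget (B i) r c else 0).

(** horizontal composition
    (Tt o T)_kj = st'_k(R' e_j) ((+)_i Tt_ki (x) T_ij) st_k(R e_j)^-1 *)
Definition hcomp (yt yt' x x' : mor1)
  (Tt : twomor (mat yt) (mat yt')) (T : twomor (mat x) (mat x'))
  : twomor (mat (comp1 yt x)) (mat (comp1 yt' x')) := fun k j =>
  castmx (Rapp_nmul_evec (mat yt') (mat x') k j, Rapp_nmul_evec (mat yt') (mat x') k j)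
    (gau yt' k (Rapp (mat x') (evec j)))
  *m castmx (sum_nmul (mat yt') (mat x') k j, sum_nmul (mat yt) (mat x) k j)
    (bdiag (fun i => Tt k i *t T i j))
  *m castmx (Rapp_nmul_evec (mat yt) (mat x) k j, Rapp_nmul_evec (mat yt) (mat x) k j)
    (invmx (gau yt k (Rapp (mat x) (evec j)))).
Arguments hcomp : clear implicits.

(** autoequivalences of n: there is (R',s') and invertible 2-morphisms
    (R',s') o (R,s) => id and (R,s) o (R',s') => id (the hom-sets of
    2-morphisms only depend on the matrices, here R'R, RR' and I_n). *)
Definition is_equiv1 (R : 'M[nat]_n) : Prop :=
  exists R' : 'M[nat]_n, (exists s' : gaugeT R', is_gauge s') /\
    (exists T : twomor (nmul R' R) nid, iso2 T) /\
    (exists T : twomor (nmul R R') nid, iso2 T).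

Definition isObj (x : mor1) : Prop := is_gauge (gau x) /\ is_equiv1 (mat x).

Definition assocE (x y z : mor1) :
  twomor (mat (comp1 (comp1 x y) z)) (mat (comp1 x (comp1 y z))) := idmor _ _.
Definition lunitE (x : mor1) : twomor (mat (comp1 id1 x)) (mat x) := idmor _ _.
Definition lunitE_inv (x : mor1) : twomor (mat x) (mat (comp1 id1 x)) := idmor _ _.
Definition runitE (x : mor1) : twomor (mat (comp1 x id1)) (mat x) := idmor _ _.
Definition runitE_inv (x : mor1) : twomor (mat x) (mat (comp1 x id1)) := idmor _ _.

Definition gammaA (x : mor1) (u : twomor (mat id1) (mat id1)) : twomor (mat x) (mat x) :=
  vcomp (lunitE x) (vcomp (hcomp id1 id1 x x u (id2 (mat x))) (lunitE_inv x)).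
Definition deltaA (x : mor1) (u : twomor (mat id1) (mat id1)) : twomor (mat x) (mat x) :=
  vcomp (runitE x) (vcomp (hcomp x x id1 id1 (id2 (mat x)) u) (runitE_inv x)).

(** S_n with the composition of the paper: (s t)(j) = s (t j)
    (MathComp's product of permutations is (s * t) j = t (s j)) *)
Definition pmul (s t : 'S_n) : 'S_n := (t * s)%g.
Definition sact (s : 'S_n) (l : 'I_n -> CC) : 'I_n -> CC := fun i => l ((s^-1)%g i).

(** the cocycle attached to a choice of representatives A_s and of
    isomorphisms phi_{s,t} : A_s (x) A_t -> A_{st}, as an automorphism of
    A_{x(yz)}:
    phi_{x,yz} (1 (x) phi_{y,z}) a (phi_{x,y} (x) 1)^-1 phi_{xy,z}^-1 *)
Definition sinh_loop (A : 'S_n -> mor1)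
  (phi : forall s t, twomor (mat (comp1 (A s) (A t))) (mat (A (pmul s t))))
  (x y z : 'S_n) : twomor (mat (A (pmul x (pmul y z)))) (mat (A (pmul x (pmul y z)))) :=
  vcomp (phi x (pmul y z))
  (vcomp (hcomp (A x) (A x) (comp1 (A y) (A z)) (A (pmul y z)) (id2 _) (phi y z))
  (vcomp (assocE (A x) (A y) (A z))
  (vcomp (inv2 (hcomp (comp1 (A x) (A y)) (A (pmul x y)) (A z) (A z) (phi x y) (id2 _)))
  (vcomp (inv2 (phi (pmul x y) z))
         (idmor (mat (A (pmul x (pmul y z)))) (mat (A (pmul (pmul x y) z)))))))).

Definition cobound (h : 'S_n -> 'S_n -> 'I_n -> CC) (x y z : 'S_n) : 'I_n -> CC :=
  fun i => sact x (h y z) i * (h (pmul x y) z i)^-1 * h x (pmul y z) i * (h x y i)^-1.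

Definition EObj (s : 'S_n) : mor1 := Mor1 (triv_gauge (Pmat s)).
(* image of a morphism (s,l) (more generally of the identity morphism s -> t,
   s = t, scaled by l): the (s(j), j) entry is the 1x1 matrix l_{s(j)},
   all other entries are empty *)
Definition Emor (s t : 'S_n) (l : 'I_n -> CC) : twomor (Pmat s) (Pmat t) :=
  fun i j => l i *: \matrix_(r, c) ((nat_of_ord r == nat_of_ord c)%:R : CC).
Definition E2 (s t : 'S_n) : twomor (mat (comp1 (EObj s) (EObj t))) (Pmat (pmul s t)) :=
  idmor _ _.
Definition E0 : twomor (mat id1) (Pmat 1%g) := idmor _ _.

Definition nonzero (l : 'I_n -> CC) : Prop := forall i, l i != 0.

End TwoMat.

Arguments E0 n : clear implicits.
Arguments hcomp {n} yt yt' x x' Tt T _ _.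

From HB Require Import structures.
From mathcomp Require Import all_boot all_order all_algebra all_fingroup.
From mathcomp Require Import complex mxtens Rstruct zify ring.
From Stdlib Require Import FunctionalExtensionality ClassicalEpsilon.

Set Implicit Arguments.
Unset Strict Implicit.
Unset Printing Implicit Defensive.

Import GRing.Theory.
Local Open Scope ring_scope.

(* A matrix over N with an inverse over N has a single entry 1 in each column, so the
   autoequivalences of [n] are the 1-morphisms with a permutation matrix.  A 2-morphism
   between two of them is an array of 1x1 blocks supported on the permutation, i.e. one
   complex scalar per column, and normalized gauges contribute only factors 1 on these
   blocks.  Vertical composition multiplies the scalars column by column, horizontal
   composition multiplies the two scalars met along the composite permutation, and every
   claim becomes an identity between products of nonzero complex numbers: the unitors
   produce the permutation action of S_n on (C^* )^n, and the loop defining Sinh's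
   invariant has the coboundary of the scalars of the structure 2-cells as its scalars. *)

Lemma castmx_scalar (R : pzRingType) p p' (e : (p = p') * (p = p')) (a : R) :
  castmx e a%:M = a%:M.
Proof. by case: e => e1 e2; subst; rewrite castmx_id. Qed.

Lemma tensmx11 (R : pzRingType) p q : (1%:M : 'M[R]_p) *t (1%:M : 'M[R]_q) = 1%:M.
Proof.
apply/matrixP => i j.
case: (mxtens_indexP i) => i0 i1; case: (mxtens_indexP j) => j0 j1.
rewrite tensmxE !mxE (inj_eq (can_inj (@mxtens_indexK _ _))) xpair_eqE.
by case: (i0 == j0); case: (i1 == j1); rewrite /= ?mulr1 ?mul1r ?mulr0.
Qed.

(** * Entries of matrices of size at most 1 *)

Lemma mxgetE p q (M : 'M[CC]_(p, q)) (i : 'I_p) (j : 'I_q) : mxget M i j = M i j.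
Proof. by rewrite /mxget !valK. Qed.

Lemma mxget0 p q (M : 'M[CC]_(p.+1, q.+1)) : mxget M 0 0 = M ord0 ord0.
Proof. exact: (mxgetE M ord0 ord0). Qed.

Lemma mxget_empty p q (M : 'M[CC]_(p, q)) : (p = 0)%N \/ (q = 0)%N -> mxget M 0 0 = 0.
Proof.
rewrite /mxget; case=> h; first by rewrite insubN ?h.
by case: (insub 0%N) => // r; rewrite insubN ?h.
Qed.

Lemma mx_le1_eq p q (M N : 'M[CC]_(p, q)) : (p <= 1)%N -> (q <= 1)%N ->
  ((0 < p)%N -> (0 < q)%N -> mxget M 0 0 = mxget N 0 0) -> M = N.
Proof.
move=> hp hq eMN; apply/matrixP=> i j.
have i0 : nat_of_ord i = 0%N by move: (ltn_ord i); case: (nat_of_ord i) => //= k; lia.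
have j0 : nat_of_ord j = 0%N by move: (ltn_ord j); case: (nat_of_ord j) => //= k; lia.
have p0 : (0 < p)%N by move: (ltn_ord i); lia.
have q0 : (0 < q)%N by move: (ltn_ord j); lia.
by rewrite -(mxgetE M) -(mxgetE N) i0 j0 eMN.
Qed.

Lemma mxget_mul p m q (A : 'M[CC]_(p, m)) (B : 'M[CC]_(m, q)) : (m <= 1)%N ->
  mxget (A *m B) 0 0 = mxget A 0 0 * mxget B 0 0.
Proof.
case: p A => [|p] A; first by rewrite (mxget_empty (A *m B)) ?(mxget_empty A) ?mul0r //; left.
case: q B => [|q] B; first by rewrite (mxget_empty (A *m B)) ?(mxget_empty B) ?mulr0 //; right.
case: m A B => [|[|m]] A B // _; last by rewrite !mxget0 mxE big_ord1.
by rewrite mxget0 mxE big_ord0 (mxget_empty A) ?mul0r //; right.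
Qed.

Lemma mxget_cast p q p' q' (e : (p = p') * (q = q')) (M : 'M[CC]_(p, q)) r c :
  mxget (castmx e M) r c = mxget M r c.
Proof. by case: e => e1 e2; subst; rewrite castmx_id. Qed.

Lemma mxget_scalar p (a : CC) : (0 < p)%N -> mxget (a%:M : 'M_p) 0 0 = a.
Proof. by case: p => // p _; rewrite mxget0 mxE eqxx mulr1n. Qed.

Lemma mxget_inv p (M : 'M[CC]_p) : (p <= 1)%N -> mxget (invmx M) 0 0 = (mxget M 0 0)^-1.
Proof.
case: p M => [|[|p]] M // _; last first.
  by rewrite [M]mx11_scalar invmx_scalar !mxget0 !mxE !eqxx !mulr1n.
by rewrite !mxget_empty ?invr0 //; left.
Qed.

Lemma mxget_scale p q (a : CC) (M : 'M[CC]_(p, q)) r c :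
  mxget (a *: M) r c = a * mxget M r c.
Proof.
by rewrite /mxget; case: (insub r) => [x|]; [case: (insub c) => [y|] |]; rewrite ?mxE ?mulr0.
Qed.

Lemma mxget_idmx p q : (0 < p)%N -> (0 < q)%N ->
  mxget (\matrix_(r, c) ((nat_of_ord r == nat_of_ord c)%:R : CC) : 'M_(p, q)) 0 0 = 1.
Proof. by case: p => // p; case: q => // q _ _; rewrite mxget0 mxE. Qed.

Lemma mxget_tens m1 n1 m2 n2 (A : 'M[CC]_(m1, n1)) (B : 'M[CC]_(m2, n2)) :
  mxget (A *t B) 0 0 = mxget A 0 0 * mxget B 0 0.
Proof.
case: m1 A => [|m1] A.
  by rewrite (mxget_empty (A *t B)) ?(mxget_empty A) ?mul0r //; left.
case: n1 A => [|n1] A.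
  by rewrite (mxget_empty (A *t B)) ?(mxget_empty A) ?mul0r //; right.
case: m2 B => [|m2] B.
  by rewrite (mxget_empty (A *t B)) ?(mxget_empty B) ?mulr0 //; left; rewrite ?muln0.
case: n2 B => [|n2] B.
  by rewrite (mxget_empty (A *t B)) ?(mxget_empty B) ?mulr0 //; right; rewrite ?muln0.
have := mxgetE (A *t B) (mxtens_index (ord0, ord0)) (mxtens_index (ord0, ord0)).
by rewrite /= !mul0n !addn0 => ->; rewrite tensmxE !mxget0.
Qed.

Lemma mxget_mxblock m1 m2 (p_ : 'I_m1 -> nat) (q_ : 'I_m2 -> nat)
    (B : forall i j, 'M[CC]_(p_ i, q_ j)) i0 j0 :
  (forall i, i != i0 -> p_ i = 0%N) -> (forall j, j != j0 -> q_ j = 0%N) ->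
  (p_ i0 <= 1)%N -> (q_ j0 <= 1)%N ->
  mxget (mxblock B) 0 0 = mxget (B i0 j0) 0 0.
Proof.
move=> hp hq hp1 hq1.
have sp : (\sum_i p_ i = p_ i0)%N by rewrite (bigD1 i0) //= big1 ?addn0 // => i /hp.
have sq : (\sum_j q_ j = q_ j0)%N by rewrite (bigD1 j0) //= big1 ?addn0 // => i /hq.
case: (posnP (p_ i0)) => p0.
  by rewrite (mxget_empty (mxblock B)) ?(mxget_empty (B i0 j0)) //; left; rewrite ?sp.
case: (posnP (q_ j0)) => q0.
  by rewrite (mxget_empty (mxblock B)) ?(mxget_empty (B i0 j0)) //; right; rewrite ?sq.
have r0 : (0 < \sum_i p_ i)%N by rewrite sp.
have c0 : (0 < \sum_j q_ j)%N by rewrite sq.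
rewrite (mxgetE (mxblock B) (Ordinal r0) (Ordinal c0)) mxE.
have e1 : tagnat.sig1 (Ordinal r0) = i0.
  by apply/eqP; apply: contraT => /hp; case: (tagnat.sig2 (Ordinal r0)) => ? /[swap] ->.
have e2 : tagnat.sig1 (Ordinal c0) = j0.
  by apply/eqP; apply: contraT => /hq; case: (tagnat.sig2 (Ordinal c0)) => ? /[swap] ->.
move: (tagnat.sig2 (Ordinal r0)) (tagnat.sig2 (Ordinal c0)); rewrite e1 e2 => x y.
have x0 : nat_of_ord x = 0%N by move: (ltn_ord x); lia.
have y0 : nat_of_ord y = 0%N by move: (ltn_ord y); lia.
by rewrite -(mxgetE (B i0 j0)) x0 y0.
Qed.

Lemma mxget_bdiag m (p_ q_ : 'I_m -> nat) (B : forall i, 'M[CC]_(p_ i, q_ i)) i0 :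
  (forall i, i != i0 -> p_ i = 0%N) -> (forall j, j != i0 -> q_ j = 0%N) ->
  (p_ i0 <= 1)%N -> (q_ i0 <= 1)%N ->
  mxget (bdiag B) 0 0 = mxget (B i0) 0 0.
Proof.
move=> hp hq hp1 hq1; rewrite /bdiag (mxget_mxblock _ hp hq) // eqxx.
by congr mxget; apply/matrixP => r c; rewrite mxE mxgetE.
Qed.

Lemma mxget_mxdiag m (p_ : 'I_m -> nat) (B : forall i, 'M[CC]_(p_ i)) i0 :
  (forall i, i != i0 -> p_ i = 0%N) -> (p_ i0 <= 1)%N ->
  mxget (mxdiag B) 0 0 = mxget (B i0) 0 0.
Proof.
by move=> hp hp1; rewrite /mxdiag (mxget_mxblock _ hp hp) // eqxx conform_mx_id.
Qed.

(** * Permutation matrices *)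

Section Equiv2Mat.
Variable n : nat.
Implicit Types (s t w : 'S_n) (R : 'M[nat]_n).

Lemma Pmat_E s i j : Pmat s i j = (i == s j) :> nat.
Proof. by rewrite mxE. Qed.

Lemma nid_Pmat : nid n = Pmat 1%g.
Proof. by apply/matrixP => i j; rewrite mxE Pmat_E perm1. Qed.

Lemma nid_diag i : nid n i i = 1%N.
Proof. by rewrite mxE eqxx. Qed.

Lemma Pmat_le1 s i j : (Pmat s i j <= 1)%N.
Proof. by rewrite Pmat_E; case: (_ == _). Qed.

Lemma Pmat_diag s j : Pmat s (s j) j = 1%N.
Proof. by rewrite Pmat_E eqxx. Qed.

Lemma Pmat_gt0 s i j : (0 < Pmat s i j)%N = (i == s j).
Proof. by rewrite Pmat_E; case: (_ == _). Qed.

Lemma Pmat_support s i j : (0 < Pmat s i j)%N -> i = s j.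
Proof. by rewrite Pmat_E; case: eqP. Qed.

Lemma Pmat_off s i j : i != s j -> Pmat s i j = 0%N.
Proof. by rewrite Pmat_E => /negPf ->. Qed.

Lemma Pmat_inj : injective (@Pmat n).
Proof. by move=> s t e; apply/permP => j; apply/esym/Pmat_support; rewrite e Pmat_diag. Qed.

Lemma pmulE s t j : pmul s t j = s (t j).
Proof. by rewrite /pmul permM. Qed.

Lemma pmulA s1 s2 s3 : pmul (pmul s1 s2) s3 = pmul s1 (pmul s2 s3).
Proof. by rewrite /pmul mulgA. Qed.

Lemma pmul1s s : pmul 1%g s = s.
Proof. by rewrite /pmul mulg1. Qed.

Lemma pmuls1 s : pmul s 1%g = s.
Proof. by rewrite /pmul mul1g. Qed.

Lemma nmul_Pmat s t : nmul (Pmat s) (Pmat t) = Pmat (pmul s t).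
Proof.
apply/matrixP => i j; rewrite mxE (bigD1 (t j)) //= big1 ?addn0.
  by rewrite !Pmat_E eqxx muln1 pmulE.
by move=> k /negPf hk; rewrite (Pmat_E t) hk muln0.
Qed.

Lemma Rapp_Pmat s m : Rapp (Pmat s) (evec m) = evec (s m).
Proof. by apply: functional_extensionality => i; rewrite Rapp_evec Pmat_E. Qed.

(* Column [j] of [R] is supported at the [k] with [R' j k * R k j > 0]. *)
Lemma nmul_nid_Pmat R R' :
  (forall i j, nmul R' R i j = nid n i j) -> (forall i j, nmul R R' i j = nid n i j) ->
  exists s : 'S_n, R = Pmat s.
Proof.
move=> H1 H2.
have h1 i j : (\sum_k R' i k * R k j)%N = (i == j) :> nat by have := H1 i j; rewrite !mxE.
have h2 i j : (\sum_k R i k * R' k j)%N = (i == j) :> nat by have := H2 i j; rewrite !mxE.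
pose kf j := odflt j [pick k | (0 < R' j k * R k j)%N].
have kfP j : (0 < R' j (kf j) * R (kf j) j)%N.
  rewrite /kf; case: pickP => //= H.
  have := h1 j j; rewrite eqxx big1 // => k _.
  by have := H k; rewrite lt0n => /negbFE/eqP.
have R'_col i j : i != j -> R' i (kf j) = 0%N.
  move=> /negPf ne; have := h1 i j; rewrite ne (bigD1 (kf j)) //= => /eqP.
  rewrite addn_eq0 muln_eq0 => /andP [/orP [/eqP //|/eqP h] _].
  by move: (kfP j); rewrite h muln0.
have R_col k j : R k j = (k == kf j) :> nat.
  have := h2 k (kf j); rewrite (bigD1 j) //= big1 ?addn0; last first.
    by move=> m /R'_col ->; rewrite muln0.
  case: eqP => [<-|_]; first by move/eqP; rewrite muln_eq1 => /andP [/eqP -> _].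
  move/eqP; rewrite muln_eq0 => /orP [/eqP //|/eqP h].
  by move: (kfP j); rewrite h mul0n.
have kf_inj : injective kf.
  move=> j j' e; apply/eqP; apply: contraT => ne.
  by move: (kfP j); rewrite e (R'_col _ _ ne) mul0n.
by exists (perm kf_inj); apply/matrixP => i j; rewrite R_col Pmat_E permE.
Qed.

(** * Scalar entries of 2-morphisms *)

Section TwoMorphisms.
Variables R R' : 'M[nat]_n.

Lemma twomor_le1_eq (T1 T2 : twomor R R') :
  (forall i j, R i j <= 1)%N -> (forall i j, R' i j <= 1)%N ->
  (forall i j, 0 < R i j -> 0 < R' i j -> mxget (T1 i j) 0 0 = mxget (T2 i j) 0 0)%N ->
  T1 = T2.
Proof.
move=> h1 h2 h; apply: functional_extensionality_dep => i.
by apply: functional_extensionality_dep => j; apply: mx_le1_eq => // ? ?; apply: h.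
Qed.

Lemma vcomp_entry R'' (A : twomor R' R'') (B : twomor R R') i j :
  (R' i j <= 1)%N -> mxget (vcomp A B i j) 0 0 = mxget (A i j) 0 0 * mxget (B i j) 0 0.
Proof. exact: mxget_mul. Qed.

Lemma idmor_entry i j : (0 < R i j)%N -> (0 < R' i j)%N -> mxget (idmor R R' i j) 0 0 = 1.
Proof. by move=> h h'; apply: mxget_idmx. Qed.

Lemma id2_entry i j : (0 < R i j)%N -> mxget (id2 R i j) 0 0 = 1.
Proof. exact: mxget_scalar. Qed.

Lemma iso2_mat_eq (T : twomor R R') : iso2 T -> forall i j, R i j = R' i j.
Proof.
case=> T' [e1 e2] i j.
have h1 := congr1 (fun F : twomor R R => F i j) e1.
have h2 := congr1 (fun F : twomor R' R' => F i j) e2.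
rewrite /= /vcomp /id2 in h1 h2; apply/eqP; rewrite eqn_leq; apply/andP; split.
  by rewrite -[X in (X <= _)%N](mxrank1 CC) -h1 (leq_trans (mxrankM_maxr _ _)) ?rank_leq_row.
by rewrite -[X in (X <= _)%N](mxrank1 CC) -h2 (leq_trans (mxrankM_maxr _ _)) ?rank_leq_row.
Qed.

Lemma iso2_entry_neq0 (T : twomor R R') i j : iso2 T -> (0 < R i j)%N -> (R' i j <= 1)%N ->
  mxget (T i j) 0 0 != 0.
Proof.
case=> T' [e1 _] hp hl; have := congr1 (fun F : twomor R R => mxget (F i j) 0 0) e1.
rewrite /= vcomp_entry // id2_entry // => e.
by apply: contra_eq_neq e => ->; rewrite mulr0 eq_sym oner_neq0.
Qed.

Lemma inv2_spec (T : twomor R R') : iso2 T ->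
  vcomp (inv2 T) T = id2 R /\ vcomp T (inv2 T) = id2 R'.
Proof. exact: epsilon_spec. Qed.

Lemma inv2_entry (T : twomor R R') i j : iso2 T -> (0 < R i j)%N -> (R' i j <= 1)%N ->
  mxget (inv2 T i j) 0 0 = (mxget (T i j) 0 0)^-1.
Proof.
move=> h hp hl; have nz := iso2_entry_neq0 h hp hl.
have := congr1 (fun F : twomor R R => mxget (F i j) 0 0) (proj1 (inv2_spec h)).
by rewrite /= vcomp_entry // id2_entry // => e; rewrite -[LHS](mulfK nz) e mul1r.
Qed.

End TwoMorphisms.

Lemma iso2_of_entries R R' (T : twomor R R') :
  (forall i j, R i j = R' i j) -> (forall i j, R i j <= 1)%N ->
  (forall i j, (0 < R i j)%N -> mxget (T i j) 0 0 != 0) -> iso2 T.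
Proof.
move=> e hl hnz; have hl' i j : (R' i j <= 1)%N by rewrite -e.
exists (fun i j => (mxget (T i j) 0 0)^-1 *: idmor R' R i j).
split; apply: twomor_le1_eq => // i j hp _; rewrite vcomp_entry // mxget_scale.
  by rewrite idmor_entry -?e // id2_entry // mulr1 mulVf ?hnz.
by rewrite idmor_entry ?e // id2_entry // mulr1 mulfV ?hnz ?e.
Qed.

Section PermutationTwoMorphisms.
Variables (R R' : 'M[nat]_n) (w : 'S_n).
Hypotheses (eR : R = Pmat w) (eR' : R' = Pmat w).

Lemma Pmat_eq_le1 i j : (R i j <= 1)%N.
Proof. by rewrite eR Pmat_le1. Qed.

Lemma Pmat_eq_diag j : (0 < R (w j) j)%N.
Proof. by rewrite eR Pmat_diag. Qed.

Lemma Pmat_eq_support i j : (0 < R i j)%N -> i = w j.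
Proof. by rewrite eR; apply: Pmat_support. Qed.

Lemma iso2_Pmat (T : twomor R R') : (forall j, mxget (T (w j) j) 0 0 != 0) -> iso2 T.
Proof.
move=> h; apply: iso2_of_entries => [i j|i j|i j /Pmat_eq_support ->] //.
  by rewrite eR eR'.
exact: Pmat_eq_le1.
Qed.

Lemma twomor_Pmat_eq (T1 T2 : twomor R R') :
  (forall j, mxget (T1 (w j) j) 0 0 = mxget (T2 (w j) j) 0 0) -> T1 = T2.
Proof.
move=> h; apply: twomor_le1_eq => [i j|i j|i j /Pmat_eq_support -> _] //.
  exact: Pmat_eq_le1.
by rewrite eR' Pmat_le1.
Qed.

End PermutationTwoMorphisms.

Lemma Emor_entry s t l i j : (0 < Pmat s i j)%N -> (0 < Pmat t i j)%N ->
  mxget (Emor s t l i j) 0 0 = l i.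
Proof. by move=> hs ht; rewrite mxget_scale mxget_idmx ?mulr1. Qed.

(** * Normalized gauges and horizontal composition *)

(* Unlike [is_gauge], this is stable under [comp1] of permutation 1-morphisms. *)
Definition normalized (y : mor1 n) : Prop := forall k m,
  (0 < Rapp (mat y) (evec m) k)%N -> mxget (gau y k (evec m)) 0 0 = 1.

Lemma gauge_normalized (y : mor1 n) : is_gauge (gau y) -> normalized y.
Proof. by case=> _ h k m hp; rewrite h mxget_scalar. Qed.

Lemma triv_gauge_is_gauge R : is_gauge (triv_gauge R).
Proof. by split => // i a; rewrite /triv_gauge unitmx1. Qed.

Lemma normalized_EObj s : normalized (EObj s).
Proof. exact/gauge_normalized/triv_gauge_is_gauge. Qed.

Lemma normalized_id1 : normalized (id1 n).
Proof. exact/gauge_normalized/triv_gauge_is_gauge. Qed.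

(* With normalized gauges the conjugating gauge factors of [hcomp] are 1, and of the
   blocks of [bdiag] only the one through the intermediate index [b j] is nonempty. *)
Lemma hcomp_entry (yt yt' x x' : mor1 n) Tt T a b k j :
  mat yt = Pmat a -> mat yt' = Pmat a -> mat x = Pmat b -> mat x' = Pmat b ->
  normalized yt -> normalized yt' -> k = a (b j) ->
  mxget (hcomp yt yt' x x' Tt T k j) 0 0 = mxget (Tt k (b j)) 0 0 * mxget (T (b j) j) 0 0.
Proof.
move=> Ey Ey' Ex Ex' Ny Ny' ->.
have le1 (u v : mor1 n) : mat u = Pmat a -> mat v = Pmat b ->
    (nmul (mat u) (mat v) (a (b j)) j <= 1)%N.
  by move=> -> ->; rewrite nmul_Pmat Pmat_le1.
rewrite /hcomp mxget_mul ?le1 // mxget_mul ?le1 // !mxget_cast.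
have -> : mxget (gau yt' (a (b j)) (Rapp (mat x') (evec j))) 0 0 = 1.
  by rewrite Ex' Rapp_Pmat Ny' // Rapp_evec Ey' Pmat_diag.
have -> : mxget (invmx (gau yt (a (b j)) (Rapp (mat x) (evec j)))) 0 0 = 1.
  rewrite mxget_inv; last by rewrite Rapp_nmul Rapp_evec le1.
  by rewrite Ex Rapp_Pmat Ny ?invr1 // Rapp_evec Ey Pmat_diag.
rewrite (@mxget_bdiag _ _ _ _ (b j)).
- by rewrite mxget_tens mul1r mulr1.
- by move=> i ne; rewrite Ex' Pmat_off ?muln0.
- by move=> i ne; rewrite Ex Pmat_off ?muln0.
- by rewrite Ey' Ex' -[1%N]/(1 * 1)%N leq_mul ?Pmat_le1.
- by rewrite Ey Ex -[1%N]/(1 * 1)%N leq_mul ?Pmat_le1.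
Qed.
Arguments hcomp_entry [yt yt' x x' Tt T] a b [k j].

Lemma normalized_comp1 (u v : mor1 n) a b : is_gauge (gau u) -> is_gauge (gau v) ->
  mat u = Pmat a -> mat v = Pmat b -> normalized (comp1 u v).
Proof.
move=> Gu Gv Eu Ev k m hp.
have Nu := gauge_normalized Gu; have Nv := gauge_normalized Gv.
have -> : k = a (b m).
  by move: hp; rewrite /= Rapp_evec Eu Ev nmul_Pmat => /Pmat_support; rewrite pmulE.
have le1 : (Rapp (nmul (mat u) (mat v)) (evec m) (a (b m)) <= 1)%N.
  by rewrite Rapp_evec Eu Ev nmul_Pmat Pmat_le1.
have u1 : mxget (gau u (a (b m)) (Rapp (mat v) (evec m))) 0 0 = 1.
  by rewrite Ev Rapp_Pmat Nu // Rapp_evec Eu Pmat_diag.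
rewrite /= /gcomp mulmx1 mxget_mul // !mxget_cast mxget_mul ?Rapp_nmul // u1 mul1r.
rewrite (@mxget_mxdiag _ _ _ (b m)); first last.
- by rewrite Eu -[1%N]/(1 * 1)%N leq_mul ?Pmat_le1 // Rapp_evec Ev Pmat_le1.
- by move=> i ne; rewrite Rapp_evec Ev Pmat_off ?muln0.
rewrite (@mxget_mxdiag _ _ _ m); first last.
- by rewrite /evec eqxx muln1 Rapp_nmul.
- by move=> j ne; rewrite /evec (negPf ne) muln0.
rewrite !mxget_tens mxget_inv ?Rapp_nmul // u1 invr1 mul1r.
rewrite !mxget_scalar ?mulr1 ?Nv // ?Rapp_evec ?Ev ?Eu ?Pmat_diag ?mulr1 //.
by rewrite /evec eqxx.
Qed.

Lemma normalized_comp1_EObj s t : normalized (comp1 (EObj s) (EObj t)).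
Proof. by apply: (@normalized_comp1 (EObj s) (EObj t) s t) => //; apply: triv_gauge_is_gauge. Qed.

Local Hint Resolve normalized_EObj normalized_id1 normalized_comp1_EObj : core.

Lemma gcomp_triv_gauge s t k a :
  gcomp (triv_gauge (Pmat s)) (triv_gauge (Pmat t)) k a = 1%:M.
Proof.
rewrite /gcomp /triv_gauge mulmx1 mul1mx.
under eq_mxdiag => i do rewrite tensmx11.
under [X in _ *m castmx _ X]eq_mxdiag => i do rewrite invmx_scalar invr1 tensmx11.
by rewrite !mxdiagZ !castmx_scalar mulmx1.
Qed.

Lemma Mor1_triv_eq R R' (e : R = R') (g : gaugeT R) (g' : gaugeT R') :
  (forall i a, g i a = 1%:M) -> (forall i a, g' i a = 1%:M) -> Mor1 g = Mor1 g'.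
Proof.
subst => h h'; congr Mor1.
apply: functional_extensionality_dep => i; apply: functional_extensionality_dep => a.
by rewrite h h'.
Qed.

Lemma comp1_EObj s t : comp1 (EObj s) (EObj t) = EObj (pmul s t).
Proof. by apply: (Mor1_triv_eq (nmul_Pmat s t)) => // i a; rewrite gcomp_triv_gauge. Qed.

Lemma id1_EObj : id1 n = EObj 1%g.
Proof. by rewrite /id1 /EObj; case: _ / nid_Pmat. Qed.

(** * The functor E(n) *)

Lemma isObj_EObj s : isObj (EObj s).
Proof.
split; first exact: triv_gauge_is_gauge.
exists (Pmat (s^-1)%g); split; first by exists (triv_gauge _); apply: triv_gauge_is_gauge.
have iso_idmor R : R = Pmat 1%g -> exists T : twomor R (nid n), iso2 T.
  move=> e; exists (idmor _ _); apply: (iso2_Pmat e nid_Pmat) => j.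
  by rewrite idmor_entry ?oner_neq0 ?(Pmat_eq_diag e) ?(Pmat_eq_diag nid_Pmat).
by split; apply: iso_idmor; rewrite nmul_Pmat /pmul ?mulgV ?mulVg.
Qed.

Lemma iso2_Emor s l : nonzero l -> iso2 (Emor s s l).
Proof. by move=> nz; apply: (iso2_Pmat (w := s)) => // j; rewrite Emor_entry ?Pmat_diag. Qed.

Lemma iso2_E2 s t : iso2 (E2 s t).
Proof.
apply: (iso2_Pmat (nmul_Pmat s t) erefl) => j.
by rewrite idmor_entry ?oner_neq0 ?Pmat_diag //= nmul_Pmat Pmat_diag.
Qed.

Lemma iso2_E0 : iso2 (E0 n).
Proof.
apply: (iso2_Pmat nid_Pmat erefl) => j.
by rewrite idmor_entry ?oner_neq0 ?Pmat_diag ?(Pmat_eq_diag nid_Pmat).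
Qed.

Lemma Emor_mul s l l' : Emor s s (fun i => l i * l' i) = vcomp (Emor s s l) (Emor s s l').
Proof.
apply: (twomor_Pmat_eq (w := s)) => // j.
by rewrite vcomp_entry ?Pmat_le1 // !Emor_entry ?Pmat_diag.
Qed.

Lemma Emor1 s : Emor s s (fun _ => 1) = id2 (Pmat s).
Proof. by apply: (twomor_Pmat_eq (w := s)) => // j; rewrite Emor_entry ?id2_entry ?Pmat_diag. Qed.

Lemma Emor_inj s l l' : Emor s s l = Emor s s l' -> l = l'.
Proof.
move=> e; apply: functional_extensionality => i.
have := congr1 (fun F : twomor (Pmat s) (Pmat s) => mxget (F i ((s^-1)%g i)) 0 0) e.
by rewrite /= !Emor_entry // Pmat_E permKV eqxx.
Qed.

Lemma Emor_full s t (T : twomor (Pmat s) (Pmat t)) : iso2 T ->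
  s = t /\ exists l, nonzero l /\ T = Emor s t l.
Proof.
move=> hT; have est : s = t by apply/Pmat_inj/matrixP => i j; apply: iso2_mat_eq hT i j.
subst t; split => //; exists (fun i => mxget (T i ((s^-1)%g i)) 0 0); split.
  by move=> i; apply: iso2_entry_neq0 => //; rewrite Pmat_E permKV eqxx.
by apply: (twomor_Pmat_eq (w := s)) => // j; rewrite Emor_entry ?Pmat_diag // permK.
Qed.

Lemma E2_natural s1 s2 l1 l2 :
  vcomp (E2 s1 s2) (hcomp (EObj s1) (EObj s1) (EObj s2) (EObj s2)
                          (Emor s1 s1 l1) (Emor s2 s2 l2)) =
  vcomp (Emor (pmul s1 s2) (pmul s1 s2) (fun i => l1 i * sact s1 l2 i)) (E2 s1 s2).
Proof.
have e : mat (comp1 (EObj s1) (EObj s2)) = Pmat (pmul s1 s2) by rewrite /= nmul_Pmat.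
apply: (twomor_Pmat_eq e erefl) => j.
rewrite !vcomp_entry ?Pmat_le1 ?(Pmat_eq_le1 e) // /E2 idmor_entry ?Pmat_diag ?(Pmat_eq_diag e) //.
rewrite (hcomp_entry s1 s2) ?pmulE //.
by rewrite !Emor_entry ?Pmat_diag // -?pmulE ?Pmat_diag // mul1r mulr1 /sact pmulE permK.
Qed.

Lemma E2_assoc s1 s2 s3 :
  vcomp (Emor (pmul (pmul s1 s2) s3) (pmul s1 (pmul s2 s3)) (fun _ => 1))
    (vcomp (E2 (pmul s1 s2) s3)
       (hcomp (comp1 (EObj s1) (EObj s2)) (EObj (pmul s1 s2)) (EObj s3) (EObj s3)
              (E2 s1 s2) (id2 _))) =
  vcomp (E2 s1 (pmul s2 s3))
    (vcomp (hcomp (EObj s1) (EObj s1) (comp1 (EObj s2) (EObj s3)) (EObj (pmul s2 s3))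
                  (id2 _) (E2 s2 s3))
           (assocE (EObj s1) (EObj s2) (EObj s3))).
Proof.
set w := pmul s1 (pmul s2 s3).
have eL : mat (comp1 (comp1 (EObj s1) (EObj s2)) (EObj s3)) = Pmat w.
  by rewrite /= !nmul_Pmat pmulA.
have eM : mat (comp1 (EObj (pmul s1 s2)) (EObj s3)) = Pmat w by rewrite /= nmul_Pmat pmulA.
have eR : mat (comp1 (EObj s1) (comp1 (EObj s2) (EObj s3))) = Pmat w by rewrite /= !nmul_Pmat.
have eN : mat (comp1 (EObj s1) (EObj (pmul s2 s3))) = Pmat w by rewrite /= nmul_Pmat.
have eW : Pmat (pmul (pmul s1 s2) s3) = Pmat w by rewrite pmulA.
apply: (twomor_Pmat_eq eL erefl) => j.
rewrite !vcomp_entry ?(Pmat_eq_le1 eM) ?(Pmat_eq_le1 eW) ?(Pmat_eq_le1 eR) ?(Pmat_eq_le1 eN) //.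
rewrite Emor_entry ?(Pmat_eq_diag eW) ?Pmat_diag // mul1r /E2 /assocE.
rewrite !idmor_entry ?(Pmat_eq_diag eM) ?(Pmat_eq_diag eR) ?(Pmat_eq_diag eN)
  ?(Pmat_eq_diag eL) ?(Pmat_eq_diag eW) ?Pmat_diag //.
rewrite (hcomp_entry (pmul s1 s2) s3) ?(hcomp_entry s1 (pmul s2 s3)) ?pmulE //.
rewrite !idmor_entry ?id2_entry ?mul1r // -?pmulE ?Pmat_diag //=.
all: by rewrite /= ?nmul_Pmat ?Pmat_gt0 ?pmulE ?eqxx.
Qed.

Lemma E2_lunit s :
  vcomp (Emor (pmul 1%g s) s (fun _ => 1))
    (vcomp (E2 1%g s) (hcomp (id1 n) (EObj 1%g) (EObj s) (EObj s) (E0 n) (id2 _))) =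
  lunitE (EObj s).
Proof.
have eL : mat (comp1 (id1 n) (EObj s)) = Pmat s by rewrite /= nid_Pmat nmul_Pmat pmul1s.
have eM : mat (comp1 (EObj 1%g) (EObj s)) = Pmat s by rewrite /= nmul_Pmat pmul1s.
have eW : Pmat (pmul 1%g s) = Pmat s by rewrite pmul1s.
apply: (twomor_Pmat_eq eL erefl) => j.
rewrite !vcomp_entry ?(Pmat_eq_le1 eM) ?(Pmat_eq_le1 eW) //.
rewrite Emor_entry ?(Pmat_eq_diag eW) ?Pmat_diag // mul1r /E2 /E0 /lunitE.
rewrite !idmor_entry ?(Pmat_eq_diag eM) ?(Pmat_eq_diag eL) ?(Pmat_eq_diag eW) ?Pmat_diag //.
rewrite (hcomp_entry 1%g s) ?perm1 //; last exact: nid_Pmat.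
rewrite idmor_entry ?id2_entry ?mulr1 ?Pmat_diag //=.
all: by rewrite ?nid_diag ?Pmat_gt0 ?perm1.
Qed.

Lemma E2_runit s :
  vcomp (Emor (pmul s 1%g) s (fun _ => 1))
    (vcomp (E2 s 1%g) (hcomp (EObj s) (EObj s) (id1 n) (EObj 1%g) (id2 _) (E0 n))) =
  runitE (EObj s).
Proof.
have eL : mat (comp1 (EObj s) (id1 n)) = Pmat s by rewrite /= nid_Pmat nmul_Pmat pmuls1.
have eM : mat (comp1 (EObj s) (EObj 1%g)) = Pmat s by rewrite /= nmul_Pmat pmuls1.
have eW : Pmat (pmul s 1%g) = Pmat s by rewrite pmuls1.
apply: (twomor_Pmat_eq eL erefl) => j.
rewrite !vcomp_entry ?(Pmat_eq_le1 eM) ?(Pmat_eq_le1 eW) //.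
rewrite Emor_entry ?(Pmat_eq_diag eW) ?Pmat_diag // mul1r /E2 /E0 /runitE.
rewrite !idmor_entry ?(Pmat_eq_diag eM) ?(Pmat_eq_diag eL) ?(Pmat_eq_diag eW) ?Pmat_diag //.
rewrite (hcomp_entry s 1%g) ?perm1 //; last exact: nid_Pmat.
rewrite idmor_entry ?id2_entry ?mulr1 ?Pmat_diag //=.
all: by rewrite ?nid_diag ?Pmat_gt0 ?perm1.
Qed.

(** * pi_0, pi_1 and Sinh's invariant *)

Definition mor_perm (x : mor1 n) : 'S_n := odflt 1%g [pick s | mat x == Pmat s].

Lemma mor_permE (x : mor1 n) s : mat x = Pmat s -> mor_perm x = s.
Proof.
move=> e; rewrite /mor_perm; case: pickP => /= [t /eqP e'|/(_ s)].
  by apply: Pmat_inj; rewrite -e -e'.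
by rewrite e eqxx.
Qed.

Lemma isObj_Pmat (x : mor1 n) : isObj x -> mat x = Pmat (mor_perm x).
Proof.
case=> _ [R' [_ [[T1 h1] [T2 h2]]]].
have [s e] := nmul_nid_Pmat (iso2_mat_eq h1) (iso2_mat_eq h2).
by rewrite (mor_permE e).
Qed.

Lemma isObj_comp1_Pmat (x y : mor1 n) : isObj x -> isObj y ->
  mat (comp1 x y) = Pmat (pmul (mor_perm x) (mor_perm y)).
Proof. by move=> hx hy; rewrite /= (isObj_Pmat hx) (isObj_Pmat hy) nmul_Pmat. Qed.

Lemma mor_perm_comp1 (x y : mor1 n) : isObj x -> isObj y ->
  mor_perm (comp1 x y) = pmul (mor_perm x) (mor_perm y).
Proof. by move=> hx hy; apply/mor_permE/isObj_comp1_Pmat. Qed.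

Lemma mor_perm_iso (x y : mor1 n) : isObj x -> isObj y ->
  (mor_perm x = mor_perm y <-> exists T : twomor (mat x) (mat y), iso2 T).
Proof.
move=> hx hy; have ex := isObj_Pmat hx; have ey := isObj_Pmat hy.
split=> [e|[T hT]].
  exists (idmor _ _); apply: (iso2_Pmat ex (etrans ey (congr1 _ (esym e)))) => j.
  by rewrite idmor_entry ?oner_neq0 ?(Pmat_eq_diag ex) // ey -e Pmat_diag.
by apply: Pmat_inj; rewrite -ex -ey; apply/matrixP => i j; apply: iso2_mat_eq hT i j.
Qed.

Lemma mor_perm_EObj s : mor_perm (EObj s) = s.
Proof. exact: mor_permE. Qed.

Lemma EObj_esurj (x : mor1 n) : isObj x ->
  exists (s : 'S_n) (T : twomor (Pmat s) (mat x)), iso2 T.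
Proof.
move=> hx; have ex := isObj_Pmat hx.
exists (mor_perm x), (idmor _ _); apply: (iso2_Pmat erefl ex) => j.
by rewrite idmor_entry ?oner_neq0 ?Pmat_diag ?(Pmat_eq_diag ex).
Qed.

Definition loop_scalars (u : twomor (nid n) (nid n)) (i : 'I_n) : CC := mxget (u i i) 0 0.

Lemma nid_le1 i j : (nid n i j <= 1)%N.
Proof. by rewrite nid_Pmat Pmat_le1. Qed.

Lemma loop_scalars_neq0 u : iso2 u -> nonzero (loop_scalars u).
Proof. by move=> hu i; apply: iso2_entry_neq0; rewrite ?nid_diag ?nid_le1. Qed.

Lemma loop_scalars_vcomp u v :
  loop_scalars (vcomp u v) = (fun i => loop_scalars u i * loop_scalars v i).
Proof. by apply: functional_extensionality => i; rewrite /loop_scalars vcomp_entry ?nid_le1. Qed.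

Lemma loop_scalars_inj : injective loop_scalars.
Proof.
move=> u v e; apply: (twomor_Pmat_eq nid_Pmat nid_Pmat) => j.
by rewrite perm1; apply: (congr1 (fun f => f j) e).
Qed.

Lemma loop_scalars_surj l : nonzero l -> exists u, iso2 u /\ loop_scalars u = l.
Proof.
move=> nz; exists (fun i j => l i *: idmor (nid n) (nid n) i j); split.
  apply: (iso2_Pmat nid_Pmat nid_Pmat) => j.
  by rewrite mxget_scale idmor_entry ?mulr1 // perm1 nid_diag.
apply: functional_extensionality => i.
by rewrite /loop_scalars mxget_scale idmor_entry ?mulr1 ?nid_diag.
Qed.

(* In column [j], [gammaA x v] carries [v] at the row [s j] and [deltaA x u] carries [u] at [j]. *)
Lemma gammaA_deltaA (x : mor1 n) u v : isObj x ->
  loop_scalars v = sact (mor_perm x) (loop_scalars u) -> gammaA x v = deltaA x u.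
Proof.
move=> hx e; have ex := isObj_Pmat hx; set s := mor_perm x in e ex.
have Nx := gauge_normalized (proj1 hx).
have eL : mat (comp1 (id1 n) x) = Pmat s by rewrite /= ex nid_Pmat nmul_Pmat pmul1s.
have eR : mat (comp1 x (id1 n)) = Pmat s by rewrite /= ex nid_Pmat nmul_Pmat pmuls1.
apply: (twomor_Pmat_eq ex ex) => j.
rewrite /gammaA /deltaA !vcomp_entry ?(Pmat_eq_le1 eL) ?(Pmat_eq_le1 eR) //.
rewrite /lunitE /lunitE_inv /runitE /runitE_inv.
rewrite !idmor_entry ?(Pmat_eq_diag eL) ?(Pmat_eq_diag eR) ?(Pmat_eq_diag ex) //.
rewrite (hcomp_entry 1%g s) ?(hcomp_entry s 1%g) ?perm1 //; try exact: nid_Pmat.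
rewrite !id2_entry ?(Pmat_eq_diag ex) // !mulr1 !mul1r.
by have := congr1 (fun f => f (s j)) e; rewrite /loop_scalars /sact /= permK.
Qed.

Section SinhInvariant.
Variable A : 'S_n -> mor1 n.
Hypothesis hA : forall s, isObj (A s) /\ mor_perm (A s) = s.
Variable phi : forall s t, twomor (mat (comp1 (A s) (A t))) (mat (A (pmul s t))).
Hypothesis iso_phi : forall s t, iso2 (phi s t).

Lemma mat_A s : mat (A s) = Pmat s.
Proof. by rewrite (isObj_Pmat (proj1 (hA s))) (proj2 (hA s)). Qed.

Lemma mat_comp1_A s t : mat (comp1 (A s) (A t)) = Pmat (pmul s t).
Proof. by rewrite /= !mat_A nmul_Pmat. Qed.

(* Row [i] of [phi s t] is nonempty only in the column [(pmul s t)^-1 i]. *)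
Definition phi_scalars s t (i : 'I_n) : CC := mxget (phi s t i ((pmul s t)^-1 i)%g) 0 0.

Lemma phi_entry s t i j : i = pmul s t j -> mxget (phi s t i j) 0 0 = phi_scalars s t i.
Proof. by move=> ->; rewrite /phi_scalars permK. Qed.

Arguments phi_entry s t [i j].

Lemma phi_scalars_neq0 s t : nonzero (phi_scalars s t).
Proof.
move=> i; apply: iso2_entry_neq0 => //; last by rewrite mat_A Pmat_le1.
by rewrite mat_comp1_A Pmat_E permKV eqxx.
Qed.

Lemma normalized_comp1_A s t : normalized (comp1 (A s) (A t)).
Proof.
have G r : is_gauge (gau (A r)) by case: (hA r) => -[].
exact: normalized_comp1 (G s) (G t) (mat_A s) (mat_A t).
Qed.

Lemma normalized_A s : normalized (A s).
Proof. by apply: gauge_normalized; case: (hA s) => -[]. Qed.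

Local Hint Resolve normalized_A normalized_comp1_A : core.

Section Cocycle.
Variables x y z : 'S_n.
Let w := pmul x (pmul y z).

Lemma hcomp_phi_id2_entry j :
  mxget (hcomp (comp1 (A x) (A y)) (A (pmul x y)) (A z) (A z) (phi x y) (id2 (mat (A z)))
           (w j) j) 0 0 = phi_scalars x y (w j).
Proof.
rewrite (hcomp_entry (pmul x y) z) ?mat_comp1_A ?mat_A //; last by rewrite /w -pmulA pmulE.
by rewrite id2_entry ?mat_A ?Pmat_diag // mulr1 phi_entry // /w -pmulA pmulE.
Qed.

Lemma iso2_hcomp_phi_id2 :
  iso2 (hcomp (comp1 (A x) (A y)) (A (pmul x y)) (A z) (A z) (phi x y) (id2 (mat (A z)))).
Proof.
have e2 : mat (comp1 (comp1 (A x) (A y)) (A z)) = Pmat w by rewrite /= !mat_A !nmul_Pmat pmulA.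
have e3 : mat (comp1 (A (pmul x y)) (A z)) = Pmat w by rewrite mat_comp1_A pmulA.
apply: (iso2_Pmat e2 e3) => j; rewrite hcomp_phi_id2_entry.
exact: phi_scalars_neq0.
Qed.

Lemma sinh_loop_coboundary u : iso2 u -> loop_scalars u = cobound phi_scalars x y z ->
  sinh_loop phi x y z = gammaA (A w) u.
Proof.
move=> hu hg.
have ew : pmul (pmul x y) z = w by rewrite pmulA.
have e1 : mat (comp1 (A x) (comp1 (A y) (A z))) = Pmat w by rewrite /= !mat_A !nmul_Pmat.
have e2 : mat (comp1 (comp1 (A x) (A y)) (A z)) = Pmat w by rewrite /= !mat_A !nmul_Pmat pmulA.
have e3 : mat (comp1 (A (pmul x y)) (A z)) = Pmat w by rewrite mat_comp1_A ew.
have e4 : mat (A (pmul (pmul x y) z)) = Pmat w by rewrite mat_A ew.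
have e5 : mat (comp1 (A x) (A (pmul y z))) = Pmat w by rewrite mat_comp1_A.
have e6 : mat (comp1 (id1 n) (A w)) = Pmat w by rewrite /= mat_A nid_Pmat nmul_Pmat pmul1s.
apply: (twomor_Pmat_eq (mat_A w) (mat_A w)) => j.
rewrite /sinh_loop /gammaA !vcomp_entry ?(Pmat_eq_le1 e1) ?(Pmat_eq_le1 e2) ?(Pmat_eq_le1 e3)
  ?(Pmat_eq_le1 e4) ?(Pmat_eq_le1 e5) ?(Pmat_eq_le1 e6) //.
rewrite /assocE /lunitE /lunitE_inv !idmor_entry ?(Pmat_eq_diag e1) ?(Pmat_eq_diag e2)
  ?(Pmat_eq_diag e6) ?(Pmat_eq_diag (mat_A w)) ?(Pmat_eq_diag e4) //.
rewrite (inv2_entry iso2_hcomp_phi_id2) ?(Pmat_eq_diag e2) ?(Pmat_eq_le1 e3) //.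
rewrite hcomp_phi_id2_entry (inv2_entry (iso_phi _ _)) ?(Pmat_eq_le1 e3) ?(Pmat_eq_diag e4) //.
rewrite (hcomp_entry x (pmul y z)) ?(hcomp_entry 1%g w) ?mat_A ?mat_comp1_A ?perm1 ?pmulE //;
  try exact: nid_Pmat.
rewrite !id2_entry ?mat_A ?Pmat_diag //.
rewrite (phi_entry x (pmul y z)) ?(phi_entry y z) ?(phi_entry (pmul x y) z) -?pmulA ?pmulE //.
have := congr1 (fun f => f (w j)) hg.
rewrite /loop_scalars /cobound /sact /w !pmulE permK => ->; first by ring.
all: by rewrite ?e3 ?e4 ?Pmat_le1 ?Pmat_gt0 /w ?pmulE.
Qed.

End Cocycle.

End SinhInvariant.

End Equiv2Mat.

Theorem mainTheorem6 (n : nat) (hn : (0 < n)%N) :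
  (* pi_0 = S_n, pi_1 = (C^* )^n with the stated action, trivial class *)
  (exists f : mor1 n -> 'S_n,
     (forall x y, isObj x -> isObj y -> f (comp1 x y) = pmul (f x) (f y)) /\
     (forall x y, isObj x -> isObj y ->
        (f x = f y <-> exists T : twomor (mat x) (mat y), iso2 T)) /\
     (forall s : 'S_n, exists x, isObj x /\ f x = s) /\
     (exists g : twomor (mat (id1 n)) (mat (id1 n)) -> ('I_n -> CC),
        (forall u, iso2 u -> nonzero (g u)) /\
        (forall u v, iso2 u -> iso2 v -> g (vcomp u v) = (fun i => g u i * g v i)) /\
        (forall u v, iso2 u -> iso2 v -> g u = g v -> u = v) /\
        (forall l, nonzero l -> exists u, iso2 u /\ g u = l) /\
        (* [A].u = gamma_A^-1 delta_A (u) corresponds to f(A) . g(u) *)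
        (forall x u v, isObj x -> iso2 u -> iso2 v ->
           g v = sact (f x) (g u) -> gammaA x v = deltaA x u) /\
        (* Sinh's class in H^3(S_n, (C^* )^n) is trivial *)
        (forall A : 'S_n -> mor1 n, (forall s, isObj (A s) /\ f (A s) = s) ->
         forall phi : forall s t, twomor (mat (comp1 (A s) (A t))) (mat (A (pmul s t))),
         (forall s t, iso2 (phi s t)) ->
         exists h : 'S_n -> 'S_n -> 'I_n -> CC,
           (forall s t, nonzero (h s t)) /\
           (forall x y z u, iso2 u -> g u = cobound h x y z ->
              sinh_loop phi x y z = gammaA (A (pmul x (pmul y z))) u)))) /\
  (* E(n) : G(n) -> Equiv(n) is an equivalence of 2-groups *)
  ((forall s : 'S_n, isObj (EObj s)) /\
   (forall s t : 'S_n, comp1 (EObj s) (EObj t) = EObj (pmul s t)) /\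
   id1 n = EObj (1%g : 'S_n) /\
   (forall (s : 'S_n) l, nonzero l -> iso2 (Emor s s l)) /\
   (forall s t : 'S_n, iso2 (E2 s t)) /\ iso2 (E0 n) /\
   (* functoriality *)
   (forall (s : 'S_n) l l', nonzero l -> nonzero l' ->
      Emor s s (fun i => l i * l' i) = vcomp (Emor s s l) (Emor s s l')) /\
   (forall s : 'S_n, Emor s s (fun _ => 1) = id2 (Pmat s)) /\
   (* naturality of E_2 w.r.t. (s1,l1) (x) (s2,l2) = (s1 s2, l1 (s1 . l2)) *)
   (forall (s1 s2 : 'S_n) l1 l2, nonzero l1 -> nonzero l2 ->
      vcomp (E2 s1 s2) (hcomp (EObj s1) (EObj s1) (EObj s2) (EObj s2)
                              (Emor s1 s1 l1) (Emor s2 s2 l2)) =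
      vcomp (Emor (pmul s1 s2) (pmul s1 s2) (fun i => l1 i * sact s1 l2 i)) (E2 s1 s2)) /\
   (* associativity coherence (identity associator in G(n)) *)
   (forall s1 s2 s3 : 'S_n,
      vcomp (Emor (pmul (pmul s1 s2) s3) (pmul s1 (pmul s2 s3)) (fun _ => 1))
        (vcomp (E2 (pmul s1 s2) s3)
           (hcomp (comp1 (EObj s1) (EObj s2)) (EObj (pmul s1 s2)) (EObj s3) (EObj s3)
                  (E2 s1 s2) (id2 _))) =
      vcomp (E2 s1 (pmul s2 s3))
        (vcomp (hcomp (EObj s1) (EObj s1) (comp1 (EObj s2) (EObj s3)) (EObj (pmul s2 s3))
                      (id2 _) (E2 s2 s3))
               (assocE (EObj s1) (EObj s2) (EObj s3)))) /\
   (* unit coherences (identity unitors in G(n)) *)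
   (forall s : 'S_n,
      vcomp (Emor (pmul 1%g s) s (fun _ => 1))
        (vcomp (E2 1%g s) (hcomp (id1 n) (EObj 1%g) (EObj s) (EObj s) (E0 n) (id2 _))) =
      lunitE (EObj s)) /\
   (forall s : 'S_n,
      vcomp (Emor (pmul s 1%g) s (fun _ => 1))
        (vcomp (E2 s 1%g) (hcomp (EObj s) (EObj s) (id1 n) (EObj 1%g) (id2 _) (E0 n))) =
      runitE (EObj s)) /\
   (* the underlying functor is an equivalence: fully faithful ... *)
   (forall (s : 'S_n) l l', nonzero l -> nonzero l' -> Emor s s l = Emor s s l' -> l = l') /\
   (forall (s t : 'S_n) (T : twomor (Pmat s) (Pmat t)), iso2 T ->
      s = t /\ exists l, nonzero l /\ T = Emor s t l) /\
   (* ... and essentially surjective *)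
   (forall x : mor1 n, isObj x ->
      exists (s : 'S_n) (T : twomor (Pmat s) (mat x)), iso2 T)).
Proof.
split.
  exists (@mor_perm n); split; first exact: mor_perm_comp1.
  split; first exact: mor_perm_iso.
  split; first by move=> s; exists (EObj s); split; [apply: isObj_EObj | apply: mor_perm_EObj].
  exists (@loop_scalars n); split; first exact: loop_scalars_neq0.
  split; first by move=> u v _ _; apply: loop_scalars_vcomp.
  split; first by move=> u v _ _; apply: loop_scalars_inj.
  split; first exact: loop_scalars_surj.
  split; first by move=> x u v hx _ _; apply: gammaA_deltaA.
  move=> A hA phi iso_phi; exists (phi_scalars phi).
  by split; [apply: phi_scalars_neq0 | apply: sinh_loop_coboundary].
split; first exact: isObj_EObj.
split; first exact: comp1_EObj.
split; first exact: id1_EObj.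
split; first by move=> s l; apply: iso2_Emor.
split; first exact: iso2_E2.
split; first exact: iso2_E0.
split; first by move=> s l l' _ _; apply: Emor_mul.
split; first exact: Emor1.
split; first by move=> s1 s2 l1 l2 _ _; apply: E2_natural.
split; first exact: E2_assoc.
split; first exact: E2_lunit.
split; first exact: E2_runit.
split; first by move=> s l l' _ _; apply: Emor_inj.
split; first exact: Emor_full.
exact: EObj_esurj.
Qed.
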